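(* Let $k,n,h$ be positive integers with $k\leqslant n$ and $h\geqslant 3$, and let $C=(C_1,\ldots,C_h)$ be a tuple of pairwise distinct elements of $[n]^k_<$ which is a shelling order. If $|C_{h-1}\cap C_h|<k-1$, then $(C_1,\ldots,C_{h-2},C_h,C_{h-1})$ is a shelling order.
   Context: $[n]:=\{1,\ldots,n\}$; $[n]^k_<$ denotes the set of $k$-element subsets of $[n]$. A tuple $C=(C_1,\ldots,C_h)$ of pairwise distinct elements of $[n]^k_<$ is a shelling order if for all $i<j$ in $[h]$ there exists $z<j$ with $|C_z\cap C_j|=k-1$ and $C_i\cap C_j\subseteq C_z\cap C_j$. *)

From mathcomp Require Import all_boot.
Set Implicit Arguments. Unset Strict Implicit. Unset Printing Implicit Defensive.

(* [n] is modelled by 'I_n (elements 0..n-1 instead of 1..n).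
   A tuple (C_1,...,C_h) is modelled by C : 'I_h -> {set 'I_n},
   with C_(i+1) = C i (0-based indexing). *)

Definition ksubset_tuple (n k h : nat) (C : 'I_h -> {set 'I_n}) : Prop :=
  injective C /\ forall i, #|C i| = k.

Definition shelling_order (n k h : nat) (C : 'I_h -> {set 'I_n}) : Prop :=
  forall i j : 'I_h, i < j ->
    exists z : 'I_h, z < j /\ #|C z :&: C j| = k.-1 /\
                     (C i :&: C j \subset C z :&: C j).

Definition swap_entries (n h : nat) (C : 'I_h -> {set 'I_n}) (a b : 'I_h)
  : 'I_h -> {set 'I_n} :=
  fun i => if i == a then C b else if i == b then C a else C i.

From mathcomp Require Import all_boot.
From mathcomp Require Import fingroup perm zify.

Set Implicit Arguments.
Unset Strict Implicit.
Unset Printing Implicit Defensive.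

(* Swapping adjacent entries a and b = a + 1 reindexes the tuple by the
   transposition (a b), which preserves the order of every pair of positions
   except (a, b).  So every other pair of the new tuple takes the transported
   witness of the corresponding old pair; the bound |C_a ∩ C_b| < k - 1 keeps
   a witness for C_b away from position a, hence strictly before both.  For the
   swapped pair, a witness z of (C_a, C_b) followed by a witness of (C_z, C_a)
   is a witness of (C_b, C_a). *)

Lemma swap_entriesE (n h : nat) (C : 'I_h -> {set 'I_n}) (a b i : 'I_h) :
  swap_entries C a b i = C (tperm a b i).
Proof.
rewrite /swap_entries; case: tpermP => [->|->|/eqP/negPf-> /eqP/negPf->] //.
  by rewrite eqxx.
by case: eqP => [->|]; rewrite ?eqxx.
Qed.

Lemma tperm_adjacent_ltn (h : nat) (a b x y : 'I_h) : b = a.+1 :> nat ->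
  x < y -> (x, y) != (a, b) -> tperm a b x < tperm a b y.
Proof.
rewrite xpair_eqE.
by case: tpermP => [->|->|/val_eqP xa /val_eqP xb];
  case: tpermP => [->|->|/val_eqP ya /val_eqP yb]; rewrite -!val_eqE /=; lia.
Qed.

Section AdjacentSwap.

Variables (n k h : nat) (C : 'I_h -> {set 'I_n}) (a b : 'I_h).
Hypotheses (shC : shelling_order k C) (adj_ab : b = a.+1 :> nat)
  (Cab : #|C a :&: C b| < k.-1).

Lemma witness_of_b_neq_a (z : 'I_h) : #|C z :&: C b| = k.-1 -> z != a.
Proof. by move=> Czb; apply: contraTneq Cab => <-; rewrite Czb ltnn. Qed.

Lemma shelling_order_swap_adjacent : shelling_order k (swap_entries C a b).
Proof.
move=> i j ij.
case: (eqVneq (i, j) (a, b)) => [[-> ->] | ij_ab].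
  have a_lt_b : a < b by rewrite adj_ab.
  have [z [zb [Czb Cab_z]]] := shC a_lt_b.
  have za : z < a.
    by move: zb (witness_of_b_neq_a Czb); rewrite adj_ab -val_eqE /=; lia.
  have [y [ya [Cya Cza_y]]] := shC za.
  have yb : y < b := ltn_trans ya a_lt_b.
  exists y; rewrite !swap_entriesE tpermL tpermR.
  rewrite tpermD ?(negbT (gtn_eqF ya)) ?(negbT (gtn_eqF yb)) //.
  do 2!split=> //; apply: subset_trans Cza_y.
  rewrite subsetI subsetIr andbT setIC.
  exact: subset_trans Cab_z (subsetIl _ _).
have [z [zj [Czj Cij_z]]] := shC (tperm_adjacent_ltn adj_ab ij ij_ab).
exists (tperm a b z); rewrite !swap_entriesE tpermK; split=> //.
rewrite -(tpermK a b j); apply: tperm_adjacent_ltn => //.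
rewrite xpair_eqE negb_and.
case: (eqVneq (tperm a b j) b) => [tj|]; last by rewrite orbT.
by rewrite witness_of_b_neq_a // -tj.
Qed.

End AdjacentSwap.

Theorem proposition5p3 (k n h : nat) (C : 'I_h -> {set 'I_n}) :
  0 < k -> 0 < n -> k <= n -> 3 <= h ->
  ksubset_tuple k C -> shelling_order k C ->
  forall (a b : 'I_h), val a = h - 2 -> val b = h - 1 ->
  #|C a :&: C b| < k.-1 ->
  shelling_order k (swap_entries C a b).
Proof.
move=> _ _ _ h3 _ shC a b ha hb Cab.
by apply: shelling_order_swap_adjacent => //; rewrite hb ha; lia.
Qed.
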